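(* Consider the controlled impulsive system $\dot x(t)=Ax(t)+B_cu_c(t)$ for $t\ne t_k$, $x(t_k^+)=Jx(t_k)+B_du_d(t_k)$, with arbitrary real matrices $A,J\in\mathbb{R}^{n\times n}$, $B_c\in\mathbb{R}^{n\times m_c}$, $B_d\in\mathbb{R}^{n\times m_d}$. Assume there exist a diagonal matrix $X\in\mathbb{D}^n_{\succ0}$, matrices $U_c\in\mathbb{R}^{m_c\times n}$, $U_d\in\mathbb{R}^{m_d\times n}$ and a scalar $\alpha\in\mathbb{R}$ such that $AX+B_cU_c+\alpha I_n\ge0$, $JX+B_dU_d\ge0$, $(AX+B_cU_c)\mathbf{1}_n<0$ and $(JX+B_dU_d-X)\mathbf{1}_n<0$. Then, with $K_c=U_cX^{-1}$, $K_d=U_dX^{-1}$ and the state feedback $u_c(t)=K_cx(t)$, $u_d(t)=K_dx(t)$, the closed-loop system $\dot x=(A+B_cK_c)x$, $x(t_k^+)=(J+B_dK_d)x(t_k)$ is positive ($A+B_cK_c$ is Metzler and $J+B_dK_d$ is nonnegative) and asymptotically stable under arbitrary dwell-time.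
   Context: $\mathbb{D}^n_{\succ0}$ denotes the set of $n\times n$ diagonal matrices with positive diagonal entries. Matrix and vector inequalities are entrywise; $\mathbf{1}_n$ is the vector of ones. $x(t^+)=\lim_{s\downarrow t}x(s)$; impulse times are strictly increasing with $t_k\to\infty$. A matrix is Metzler if its off-diagonal entries are nonnegative. Asymptotic stability under arbitrary dwell-time means global asymptotic stability of the zero solution for every impulse sequence with $t_{k+1}-t_k\in(0,\infty)$. *)

From mathcomp Require Import ssreflect ssrfun ssrbool eqtype ssrnat seq fintype bigop.
From Stdlib Require Import Reals.
Open Scope R_scope.

Definition mx (n m : nat) := 'I_n -> 'I_m -> R.
Definition vec (n : nat) := 'I_n -> R.

Definition mmul {n p m : nat} (A : mx n p) (B : mx p m) : mx n m :=
  fun i j => \big[Rplus/0]_(k < p) (A i k * B k j).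
Definition madd {n m : nat} (A B : mx n m) : mx n m := fun i j => A i j + B i j.
Definition msub {n m : nat} (A B : mx n m) : mx n m := fun i j => A i j - B i j.
Definition mscal {n m : nat} (a : R) (A : mx n m) : mx n m := fun i j => a * A i j.
Definition idmx (n : nat) : mx n n := fun i j => if i == j then 1 else 0.
Definition mulmxv {n m : nat} (A : mx n m) (v : vec m) : vec n :=
  fun i => \big[Rplus/0]_(k < m) (A i k * v k).
Definition ones (n : nat) : vec n := fun _ => 1.

Definition pos_diag {n : nat} (X : mx n n) : Prop :=
  (forall i j : 'I_n, i != j -> X i j = 0) /\ (forall i : 'I_n, 0 < X i i).
Definition diag_inv {n : nat} (X : mx n n) : mx n n :=
  fun i j => if i == j then / X i i else 0.

Definition mx_nonneg {n m : nat} (A : mx n m) : Prop := forall i j, 0 <= A i j.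
Definition vec_neg {n : nat} (v : vec n) : Prop := forall i, v i < 0.
Definition metzler {n : nat} (A : mx n n) : Prop :=
  forall i j : 'I_n, i != j -> 0 <= A i j.

Definition vnorm {n : nat} (v : vec n) : R := \big[Rplus/0]_(i < n) Rabs (v i).

Definition impulse_seq (t : nat -> R) : Prop :=
  0 < t 0%nat /\ (forall k, t k < t (S k)) /\
  (forall M : R, exists k, M < t k).

(* x is a solution on [0, oo) of  x' = F x (t <> t_k),  x(t_k^+) = G x(t_k),
   x left-continuous at impulse times, x(0) is the initial value. *)
Definition impulsive_solution {n : nat} (F G : mx n n) (t : nat -> R)
    (x : R -> vec n) : Prop :=
  (forall s, 0 < s -> (forall k, s <> t k) ->
     forall i, derivable_pt_lim (fun r => x r i) s (mulmxv F (x s) i)) /\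
  (forall i eps, 0 < eps -> exists d, 0 < d /\
     forall s, 0 <= s < d -> Rabs (x s i - x 0 i) < eps) /\
  (forall k i eps, 0 < eps -> exists d, 0 < d /\
     forall s, t k - d < s <= t k -> Rabs (x s i - x (t k) i) < eps) /\
  (forall k i eps, 0 < eps -> exists d, 0 < d /\
     forall s, t k < s < t k + d -> Rabs (x s i - mulmxv G (x (t k)) i) < eps).

Definition GAS_for {n : nat} (F G : mx n n) (t : nat -> R) : Prop :=
  (forall eps, 0 < eps -> exists delta, 0 < delta /\
     forall x, impulsive_solution F G t x -> vnorm (x 0) < delta ->
       forall s, 0 <= s -> vnorm (x s) < eps) /\
  (forall x, impulsive_solution F G t x ->
     forall eps, 0 < eps -> exists T, forall s, T <= s -> vnorm (x s) < eps).

Definition AS_arbitrary_dwell {n : nat} (F G : mx n n) : Prop :=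
  forall t, impulse_seq t -> GAS_for F G t.

(* With v the diagonal of X, the closed-loop matrices satisfy F v = (A X + Bc Uc) 1 < 0
   and G v = (J X + Bd Ud) 1 < v, where F is Metzler and G is nonnegative.  Hence v is a
   linear copositive Lyapunov vector: for small c > 0 the weighted box
   { y | |y_i| <= C v_i } is invariant for w = e^(c t) x under the flow (a trajectory of a
   Metzler system cannot leave the box through a face, since there w_i' points inwards),
   and G maps the box into itself.  So |x_i(t)| <= C e^(-c t) v_i for every impulse
   sequence, which gives uniform exponential, hence asymptotic, stability. *)
From HB Require Import structures.
From mathcomp Require Import ssreflect ssrfun ssrbool eqtype ssrnat seq fintype bigop.
From Stdlib Require Import Reals Lra ClassicalEpsilon Classical.
Open Scope R_scope.

Lemma Rplus_associative : associative Rplus.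
Proof. by move=> x y z; ring. Qed.

HB.instance Definition _ :=
  Monoid.isComLaw.Build R 0 Rplus Rplus_associative Rplus_comm Rplus_0_l.

Section RealSums.

Variable n : nat.
Implicit Types f g : 'I_n -> R.

Lemma sumR_le f g :
  (forall k, f k <= g k) -> \big[Rplus/0]_(k < n) f k <= \big[Rplus/0]_(k < n) g k.
Proof. by move=> fg; apply: (big_ind2 Rle) => [|*|k _]; [lra|lra|exact: fg]. Qed.

Lemma sumR_ge0 f : (forall k, 0 <= f k) -> 0 <= \big[Rplus/0]_(k < n) f k.
Proof. by move=> f_ge0; apply: (big_ind (Rle 0)) => [|*|k _]; [lra|lra|exact: f_ge0]. Qed.

Lemma sumR_mulr f c :
  \big[Rplus/0]_(k < n) (f k * c) = (\big[Rplus/0]_(k < n) f k) * c.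
Proof. by apply: (big_ind2 (fun x y => x = y * c)) => [|? ? ? ? -> ->|] //; ring. Qed.

Lemma Rabs_sumR_le f :
  Rabs (\big[Rplus/0]_(k < n) f k) <= \big[Rplus/0]_(k < n) Rabs (f k).
Proof.
apply: (big_ind2 (fun x y => Rabs x <= y)) => [|x1 x2 y1 y2 le1 le2|k _].
- rewrite Rabs_R0; lra.
- apply: Rle_trans (Rabs_triang _ _) _; lra.
- lra.
Qed.

Lemma sumR_delta f j : (forall k, k != j -> f k = 0) -> \big[Rplus/0]_(k < n) f k = f j.
Proof. by move=> f0; rewrite (bigD1 j) //= big1 ?Rplus_0_r // => k /f0. Qed.

Lemma sumR_ge_term f i : (forall k, 0 <= f k) -> f i <= \big[Rplus/0]_(k < n) f k.
Proof.
move=> f_ge0; rewrite (bigD1 i) //= -[X in X <= _]Rplus_0_r.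
by apply: Rplus_le_compat_l; apply: (big_ind (Rle 0)) => [|*|k _]; [lra|lra|exact: f_ge0].
Qed.

End RealSums.

Lemma mulmxv_ones {n m} (M : mx n m) i :
  mulmxv M (ones m) i = \big[Rplus/0]_(j < m) M i j.
Proof. by apply: eq_bigr => j _; rewrite /ones Rmult_1_r. Qed.

Lemma mulmxv_msub {n m} (P Q : mx n m) u i :
  mulmxv (msub P Q) u i = mulmxv P u i - mulmxv Q u i.
Proof.
rewrite /mulmxv (eq_bigr (fun k => P i k * u k + Q i k * u k * (-1))) => [|k _].
  by rewrite big_split sumR_mulr /=; ring.
by rewrite /msub; ring.
Qed.

Lemma mulmxv_pos_diag {n} (X : mx n n) u i : pos_diag X -> mulmxv X u i = X i i * u i.
Proof.
by move=> [X_off _]; apply: sumR_delta => k ki; rewrite X_off ?Rmult_0_l // eq_sym.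
Qed.

Lemma mulmxv_shift {n} (F : mx n n) c y i :
  mulmxv (madd F (mscal c (idmx n))) y i = mulmxv F y i + c * y i.
Proof.
rewrite /mulmxv (eq_bigr (fun k => F i k * y k + c * idmx n i k * y k)) => [|k _]; last first.
  by rewrite /madd /mscal; ring.
rewrite big_split /= (sumR_delta _ (fun k => c * idmx n i k * y k) i) => [|k ki]; first by rewrite /idmx eqxx; ring.
by rewrite /idmx eq_sym (negbTE ki); ring.
Qed.

Lemma mmul_pos_diag {m n} (A : mx m n) (X : mx n n) i j :
  pos_diag X -> mmul A X i j = A i j * X j j.
Proof. by move=> [X_off _]; apply: sumR_delta => k kj; rewrite X_off // Rmult_0_r. Qed.

Lemma mmul_diag_inv {m n} (U : mx m n) (X : mx n n) i j :
  mmul U (diag_inv X) i j = U i j / X j j.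
Proof.
rewrite /mmul (sumR_delta _ _ j) /diag_inv ?eqxx //.
by move=> k kj; rewrite (negbTE kj) Rmult_0_r.
Qed.

Lemma mmul_mmul_diag_inv {n m p} (B : mx n m) (U : mx m p) (X : mx p p) i j :
  mmul B (mmul U (diag_inv X)) i j = mmul B U i j / X j j.
Proof.
rewrite /Rdiv /mmul -sumR_mulr; apply: eq_bigr => k _.
by rewrite -/(mmul U (diag_inv X) k j) mmul_diag_inv /Rdiv; ring.
Qed.

Lemma feedback_entry {n m} (A : mx n n) (B : mx n m) (U : mx m n) (X : mx n n) i j :
  pos_diag X ->
  madd A (mmul B (mmul U (diag_inv X))) i j = madd (mmul A X) (mmul B U) i j / X j j.
Proof.
move=> X_diag; have Xj := proj2 X_diag j.
by rewrite /madd mmul_mmul_diag_inv mmul_pos_diag //; field; lra.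
Qed.

Lemma mulmxv_col_scaled {n} (P Q : mx n n) (v : vec n) i :
  (forall j, v j <> 0) -> (forall j, P i j = Q i j / v j) ->
  mulmxv P v i = mulmxv Q (ones n) i.
Proof.
by move=> v_nz PQ; rewrite mulmxv_ones; apply: eq_bigr => j _; rewrite PQ; field.
Qed.

Lemma limit1_in_restrict f D D' l x :
  (forall r, D' r -> D r) -> limit1_in f D l x -> limit1_in f D' l x.
Proof.
move=> DD' fl eps eps_gt0; case: (fl eps eps_gt0) => alp [alp_gt0 near].
by exists alp; split=> // r [D'r rx]; apply: near; split=> //; exact: DD'.
Qed.

Lemma limit1_in_Rabs f D l x :
  limit1_in f D l x -> limit1_in (fun r => Rabs (f r)) D (Rabs l) x.
Proof.
move=> fl eps eps_gt0; case: (fl eps eps_gt0) => alp [alp_gt0 near].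
exists alp; split=> // r Dr; have := near r Dr; rewrite /= /R_dist => fr.
exact: Rle_lt_trans (Rabs_triang_inv2 _ _) fr.
Qed.

Lemma limit1_in_lt f D l x K :
  limit1_in f D l x -> l < K ->
  exists d, 0 < d /\ forall r, D r -> Rabs (r - x) < d -> f r < K.
Proof.
move=> fl lK; case: (fl (K - l) ltac:(lra)) => alp [alp_gt0 near].
exists alp; split=> // r Dr rx; have := near r (conj Dr rx); rewrite /= /R_dist => fr.
have := Rle_abs (f r - l); lra.
Qed.

Lemma limit1_in_le_left f D l s d K :
  limit1_in f D l s -> 0 < d -> (forall r, s - d < r < s -> D r /\ f r <= K) -> l <= K.
Proof.
move=> fl d_gt0 below; apply: Rnot_lt_le => Kl.
case: (fl (l - K) ltac:(lra)) => alp [alp_gt0 near].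
have m_d := Rmin_l d alp; have m_alp := Rmin_r d alp.
have m_gt0 : 0 < Rmin d alp by apply: Rmin_pos.
pose r := s - Rmin d alp / 2.
have [Dr fr] : D r /\ f r <= K by apply: below; rewrite /r; lra.
have : R_dist r s < alp by rewrite /R_dist Rabs_left /r; lra.
move=> /(conj Dr) /near; rewrite /= /R_dist Rabs_minus_sym => close.
have := Rle_abs (l - f r); lra.
Qed.

Lemma limit1_in_right f a l :
  (forall eps, 0 < eps -> exists d, 0 < d /\ forall r, a < r < a + d -> Rabs (f r - l) < eps) ->
  limit1_in f (fun r => a < r) l a.
Proof.
move=> near eps eps_gt0; case: (near eps eps_gt0) => d [d_gt0 close].
exists d; split=> // r [ar]; rewrite /= /R_dist Rabs_pos_eq => [rd|]; last lra.
by apply: close; lra.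
Qed.

Lemma limit1_in_left f b l :
  (forall eps, 0 < eps -> exists d, 0 < d /\ forall r, b - d < r < b -> Rabs (f r - l) < eps) ->
  limit1_in f (fun r => r < b) l b.
Proof.
move=> near eps eps_gt0; case: (near eps eps_gt0) => d [d_gt0 close].
exists d; split=> // r [rb]; rewrite /= /R_dist Rabs_left => [rd|]; last lra.
by apply: close; lra.
Qed.

Lemma derivable_pt_lim_cont f s l :
  derivable_pt_lim f s l -> limit1_in f (D_x no_cond s) (f s) s.
Proof. by move=> f'; exact: (derivable_continuous_pt f s (exist _ l f')). Qed.

Lemma derivable_pt_lim_ge0_left_max f s l d :
  derivable_pt_lim f s l -> 0 < d -> (forall r, s - d < r < s -> f r <= f s) -> 0 <= l.
Proof.
move=> f' d_gt0 below; apply: Rnot_lt_le => l_lt0.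
case: (f' (- l / 2) ltac:(lra)) => del close.
have del_gt0 : 0 < pos del by apply: cond_pos.
have m_d := Rmin_l d del; have m_del := Rmin_r d del.
have m_gt0 : 0 < Rmin d del by apply: Rmin_pos.
pose h := - Rmin d del / 2.
have h_lt0 : h < 0 by rewrite /h; lra.
have h_del : Rabs h < del by rewrite /h Rabs_left; lra.
have := close h (Rlt_not_eq _ _ h_lt0) h_del.
have fsh := below (s + h) ltac:(rewrite /h; lra).
have quot_ge0 : 0 <= (f (s + h) - f s) / h.
  have -> : (f (s + h) - f s) / h = (f s - f (s + h)) * / (- h) by field; lra.
  by apply: Rmult_le_pos; [lra | apply: Rlt_le; apply: Rinv_0_lt_compat; lra].
move=> quot_l; have := Rle_abs ((f (s + h) - f s) / h - l); lra.
Qed.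

Lemma derivable_pt_lim_exp_scal c s :
  derivable_pt_lim (fun r => exp (c * r)) s (c * exp (c * s)).
Proof.
have lin : derivable_pt_lim (fun r => c * r) s c.
  by have := derivable_pt_lim_scal id c s 1 (derivable_pt_lim_id s); rewrite Rmult_1_r.
rewrite Rmult_comm; exact: derivable_pt_lim_comp lin (derivable_pt_lim_exp _).
Qed.

Lemma sign_witness y : exists sg, sg * y = Rabs y /\ forall z, sg * z <= Rabs z.
Proof.
case: (Rle_dec 0 y) => y0; [exists 1 | exists (-1)]; split.
- by rewrite Rabs_pos_eq //; ring.
- by move=> z; rewrite Rmult_1_l; exact: Rle_abs.
- by rewrite Rabs_left; [ring | lra].
- by move=> z; have := Rle_abs (- z); rewrite Rabs_Ropp; lra.
Qed.

(* Taking c = 1 / (1 + sum_i 1 / f_i) avoids a minimum over a possibly empty index set. *)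
Lemma finite_pos_lb {n} (f : 'I_n -> R) :
  (forall i, 0 < f i) -> exists c, 0 < c /\ forall i, c < f i.
Proof.
move=> f_gt0; pose S := \big[Rplus/0]_(k < n) / f k.
have inv_ge0 k : 0 <= / f k by apply: Rlt_le; apply: Rinv_0_lt_compat.
have S_ge0 : 0 <= S by exact: sumR_ge0.
exists (/ (1 + S)); split=> [|i]; first by apply: Rinv_0_lt_compat; lra.
have fi := f_gt0 i; have := sumR_ge_term _ _ i inv_ge0; rewrite -/S => le_S.
rewrite -(Rinv_inv (f i)); apply: Rinv_lt_contravar; last lra.
by apply: Rmult_lt_0_compat; [apply: Rinv_0_lt_compat | lra].
Qed.

Lemma finite_nbhd {n} (D : R -> Prop) x (P : 'I_n -> R -> Prop) :
  (forall i, exists d, 0 < d /\ forall r, D r -> Rabs (r - x) < d -> P i r) ->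
  exists d, 0 < d /\ forall r, D r -> Rabs (r - x) < d -> forall i, P i r.
Proof.
move=> nbhd; pose dd i := proj1_sig (constructive_indefinite_description _ (nbhd i)).
have dd_spec i : 0 < dd i /\ forall r, D r -> Rabs (r - x) < dd i -> P i r.
  exact: (proj2_sig (constructive_indefinite_description _ (nbhd i))).
case: (finite_pos_lb dd (fun i => proj1 (dd_spec i))) => d [d_gt0 d_lt].
exists d; split=> // r Dr rx i; apply: (proj2 (dd_spec i)) => //; have := d_lt i; lra.
Qed.

(* Real induction on (a, b]: the supremum of the initial segments on which Q holds is b. *)
Lemma real_induction (a b : R) (Q : R -> Prop) : a < b ->
  (exists d, 0 < d /\ forall r, a < r < a + d -> Q r) ->
  (forall s, a < s < b -> Q s -> exists d, 0 < d /\ forall r, s <= r < s + d -> Q r) ->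
  (forall s, a < s <= b -> (forall r, a < r < s -> Q r) -> Q s) ->
  forall s, a < s <= b -> Q s.
Proof.
move=> ab [d0 [d0_gt0 start]] step limit.
pose E r := a < r <= b /\ forall q, a < q <= r -> Q q.
have E_bnd : bound E by exists b => r [[_ ?] _].
have step_in s d : a < s < b -> 0 < d -> exists r, s < r /\ r <= b /\ r < s + d.
  move=> sb d_gt0; exists (Rmin (s + d / 2) b).
  have := Rmin_l (s + d / 2) b; have := Rmin_r (s + d / 2) b.
  have : s < Rmin (s + d / 2) b by apply: Rmin_glb_lt; lra.
  lra.
have [r0 [ar0 [r0b r0d]]] : exists r0, a < r0 /\ r0 <= b /\ r0 < a + d0.
  have := Rmin_l (a + d0 / 2) b; have := Rmin_r (a + d0 / 2) b.
  have : a < Rmin (a + d0 / 2) b by apply: Rmin_glb_lt; lra.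
  by exists (Rmin (a + d0 / 2) b); lra.
have E_r0 : E r0 by split; [lra | move=> q hq; apply: start; lra].
case: (completeness E E_bnd (ex_intro _ r0 E_r0)) => m [m_ub m_lub].
have r0m : r0 <= m by exact: m_ub.
have mb : m <= b by apply: m_lub => r [[_ ?] _].
have below_m : forall r, a < r < m -> Q r.
  move=> r hr; apply: NNPP => not_Qr; suff : m <= r by lra.
  by apply: m_lub => s [hs Es]; apply: Rnot_lt_le => rs; apply: not_Qr; apply: Es; lra.
have Qm : Q m by apply: limit => //; lra.
have E_m : E m.
  split=> [|q hq]; first lra.
  by case: (Rle_lt_or_eq_dec q m ltac:(lra)) => [qm|->] //; apply: below_m; lra.
case: (Rle_lt_or_eq_dec m b mb) => [m_lt_b | m_eq_b]; last first.
  by move=> s hs; apply: (proj2 E_m); lra.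
case: (step m ltac:(lra) Qm) => d [d_gt0 beyond].
case: (step_in m d ltac:(lra) d_gt0) => m' [mm' [m'b m'd]].
suff /m_ub : E m' by lra.
split=> [|q hq]; first lra.
by case: (Rle_or_lt q m) => qm; [apply: (proj2 E_m); lra | apply: beyond; lra].
Qed.

Section MetzlerBox.

Variables (n : nat) (H : mx n n) (v : vec n).
Hypotheses (H_metzler : metzler H) (v_pos : forall i, 0 < v i)
  (Hv_neg : forall i, mulmxv H v i < 0).

(* If w reached a face |w_i| = L v_i of the box from inside, then sg * w_i would have a
   nonnegative derivative there, whereas H Metzler and H v < 0 force it to be negative. *)
Lemma metzler_flow_no_touch (w : R -> vec n) s d L :
  0 < d ->
  (forall i, derivable_pt_lim (fun r => w r i) s (mulmxv H (w s) i)) ->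
  (forall r, s - d < r < s -> forall j, Rabs (w r j) < L * v j) ->
  forall i, Rabs (w s i) < L * v i.
Proof.
move=> d_gt0 w' below.
have w_le j : Rabs (w s j) <= L * v j.
  apply: (limit1_in_le_left _ _ _ _ d _
    (limit1_in_Rabs _ _ _ _ (derivable_pt_lim_cont _ _ _ (w' j)))) => // r hr.
  by split; [split=> //; lra | apply: Rlt_le; apply: below].
move=> i; case: (Rle_lt_or_eq_dec _ _ (w_le i)) => // touch; exfalso.
have L_gt0 : 0 < L.
  have := below (s - d / 2) ltac:(lra) i; have := Rabs_pos (w (s - d / 2) i).
  have := v_pos i; nra.
case: (sign_witness (w s i)) => sg [sg_wi sg_le].
have deriv_ge0 : 0 <= sg * mulmxv H (w s) i.
  apply: (derivable_pt_lim_ge0_left_max _ _ _ d (derivable_pt_lim_scal _ sg _ _ (w' i))) => //.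
  move=> r hr; rewrite /mult_real_fct sg_wi touch.
  by apply: Rle_trans (sg_le _) _; apply: Rlt_le; apply: below.
have : sg * mulmxv H (w s) i <= L * mulmxv H v i.
  have -> : sg * mulmxv H (w s) i = \big[Rplus/0]_(j < n) (H i j * (sg * w s j)).
    by rewrite /mulmxv Rmult_comm -sumR_mulr; apply: eq_bigr => j _; ring.
  rewrite /mulmxv Rmult_comm -sumR_mulr; apply: sumR_le => j.
  rewrite Rmult_assoc (Rmult_comm (v j)); case: (eqVneq j i) => [->|ji].
  - by rewrite sg_wi touch; lra.
  - apply: Rmult_le_compat_l; first by apply: H_metzler; rewrite eq_sym.
    exact: Rle_trans (sg_le _) (w_le j).
have := Hv_neg i; nra.
Qed.

Lemma metzler_flow_box_lt (w : R -> vec n) (wa : vec n) a b L :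
  (forall s, a < s < b -> forall i, derivable_pt_lim (fun r => w r i) s (mulmxv H (w s) i)) ->
  (forall i, limit1_in (fun r => w r i) (fun r => a < r) (wa i) a) ->
  (forall i, Rabs (wa i) < L * v i) ->
  forall s, a < s < b -> forall i, Rabs (w s i) < L * v i.
Proof.
move=> w' w_a wa_lt s0 hs0.
apply: (real_induction a s0 (fun s => forall i, Rabs (w s i) < L * v i)); [lra| | | | lra].
- case: (finite_nbhd (fun r => a < r) a (fun i r => Rabs (w r i) < L * v i)).
    by move=> i; apply: (limit1_in_lt _ _ _ _ _ (limit1_in_Rabs _ _ _ _ (w_a i))).
  by move=> d [d_gt0 near]; exists d; split=> // r hr i; apply: near; rewrite ?Rabs_pos_eq; lra.
- move=> s hs Qs.
  case: (finite_nbhd (D_x no_cond s) s (fun i r => Rabs (w r i) < L * v i)).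
    move=> i; apply: (limit1_in_lt _ _ _ _ _ (limit1_in_Rabs _ _ _ _ _)) (Qs i).
    by apply: derivable_pt_lim_cont; apply: w'; lra.
  move=> d [d_gt0 near]; exists d; split=> // r hr i.
  case: (Req_dec r s) => [->|rs]; first exact: Qs.
  by apply: near; [split=> //; lra | rewrite Rabs_pos_eq; lra].
- move=> s hs below; apply: (metzler_flow_no_touch w s (s - a)); first lra.
  + by apply: w'; lra.
  + by move=> r hr; apply: below; lra.
Qed.

Lemma metzler_flow_box (w : R -> vec n) (wa : vec n) a b C :
  a < b ->
  (forall s, a < s < b -> forall i, derivable_pt_lim (fun r => w r i) s (mulmxv H (w s) i)) ->
  (forall i, limit1_in (fun r => w r i) (fun r => a < r) (wa i) a) ->
  (forall i, limit1_in (fun r => w r i) (fun r => r < b) (w b i) b) ->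
  (forall i, Rabs (wa i) <= C * v i) ->
  forall s, a < s <= b -> forall i, Rabs (w s i) <= C * v i.
Proof.
move=> ab w' w_a w_b wa_le s [a_s s_b] i.
apply: Rle_plus_epsilon => eps eps_gt0; have vi := v_pos i.
pose L := C + eps / v i.
have e_gt0 : 0 < eps / v i by apply: Rdiv_lt_0_compat.
have -> : C * v i + eps = L * v i by rewrite /L; field; lra.
have inside : forall r, a < r < b -> forall j, Rabs (w r j) < L * v j.
  apply: (metzler_flow_box_lt w wa) => // j.
  by have := wa_le j; have := v_pos j; rewrite /L; nra.
case: (Rle_lt_or_eq_dec s b s_b) => [sb | ->]; first by apply: Rlt_le; apply: inside; lra.
apply: (limit1_in_le_left _ _ _ _ (b - a) _ (limit1_in_Rabs _ _ _ _ (w_b i))); first lra.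
by move=> r hr; split; [lra | apply: Rlt_le; apply: inside; lra].
Qed.

End MetzlerBox.

Lemma metzler_flow_decay n (F : mx n n) (v : vec n) c (z : R -> vec n) (za : vec n) a b C :
  metzler F -> (forall i, 0 < v i) -> (forall i, mulmxv F v i + c * v i < 0) -> a < b ->
  (forall s, a < s < b -> forall i, derivable_pt_lim (fun r => z r i) s (mulmxv F (z s) i)) ->
  (forall i, limit1_in (fun r => z r i) (fun r => a < r) (za i) a) ->
  (forall i, limit1_in (fun r => z r i) (fun r => r < b) (z b i) b) ->
  (forall i, Rabs (za i) * exp (c * a) <= C * v i) ->
  forall s, a < s <= b -> forall i, Rabs (z s i) * exp (c * s) <= C * v i.
Proof.
move=> F_metzler v_pos Fcv ab z' z_a z_b za_le.
pose H := madd F (mscal c (idmx n)).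
pose w r i := z r i * exp (c * r).
have H_metzler : metzler H.
  move=> i j ij; rewrite /H /madd /mscal /idmx (negbTE ij) Rmult_0_r Rplus_0_r.
  exact: F_metzler.
have Hv_neg i : mulmxv H v i < 0 by rewrite mulmxv_shift.
have exp_ge0 r : 0 <= exp (c * r) by apply: Rlt_le; apply: exp_pos.
have abs_w r i : Rabs (w r i) = Rabs (z r i) * exp (c * r).
  by rewrite /w Rabs_mult (Rabs_pos_eq (exp _)).
have exp_lim r : limit1_in (fun q => exp (c * q)) (D_x no_cond r) (exp (c * r)) r.
  exact: derivable_pt_lim_cont (derivable_pt_lim_exp_scal c r).
move=> s hs i; rewrite -abs_w.
apply: (metzler_flow_box n H v H_metzler v_pos Hv_neg w (fun j => za j * exp (c * a)) a b)
  => // [r hr j|j|j|j].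
- have Fw : mulmxv F (w r) j = mulmxv F (z r) j * exp (c * r).
    by rewrite /mulmxv -sumR_mulr; apply: eq_bigr => k _; rewrite /w; ring.
  rewrite mulmxv_shift Fw /w.
  have -> : forall p, p + c * (z r j * exp (c * r)) = p + z r j * (c * exp (c * r)).
    by move=> p; ring.
  exact: derivable_pt_lim_mult (z' r hr j) (derivable_pt_lim_exp_scal c r).
- apply: limit_mul (z_a j) _; apply: limit1_in_restrict (exp_lim a).
  by move=> r ar; split=> //; lra.
- apply: limit_mul (z_b j) _; apply: limit1_in_restrict (exp_lim b).
  by move=> r rb; split=> //; lra.
- by rewrite Rabs_mult (Rabs_pos_eq (exp _)).
Qed.

Lemma nonneg_jump_bound n (G : mx n n) (v y : vec n) e C j :
  mx_nonneg G -> (forall i, mulmxv G v i <= v i) -> 0 <= C -> 0 <= e ->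
  (forall l, Rabs (y l) * e <= C * v l) -> Rabs (mulmxv G y j) * e <= C * v j.
Proof.
move=> G_ge0 Gv C_ge0 e_ge0 y_le.
apply: Rle_trans (_ : C * mulmxv G v j <= _); last exact: Rmult_le_compat_l.
apply: Rle_trans (Rmult_le_compat_r e _ _ e_ge0 (Rabs_sumR_le _ _)) _.
rewrite -sumR_mulr /mulmxv [C * _]Rmult_comm -sumR_mulr; apply: sumR_le => l.
rewrite Rabs_mult (Rabs_pos_eq _ (G_ge0 j l)); have := y_le l; have := G_ge0 j l; nra.
Qed.

Lemma impulse_times_le t :
  (forall k, t k < t k.+1) -> forall j k, (j <= k)%nat -> t j <= t k.
Proof.
move=> t_incr j; elim=> [|k IH]; first by rewrite leqn0 => /eqP ->; lra.
by rewrite leq_eqVlt => /orP [/eqP ->|]; [lra | rewrite ltnS => /IH; have := t_incr k; lra].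
Qed.

Lemma impulsive_solution_decay n (F G : mx n n) (v : vec n) c t (x : R -> vec n) C :
  metzler F -> mx_nonneg G -> (forall i, 0 < v i) ->
  (forall i, mulmxv F v i + c * v i < 0) -> (forall i, mulmxv G v i <= v i) ->
  impulse_seq t -> impulsive_solution F G t x ->
  (forall i, Rabs (x 0 i) <= C * v i) ->
  forall s, 0 <= s -> forall i, Rabs (x s i) * exp (c * s) <= C * v i.
Proof.
move=> F_metzler G_ge0 v_pos Fcv Gv [t0_gt0 [t_incr t_unbdd]] [x' [x_0 [x_left x_jump]]] x0_le.
have t_le := impulse_times_le t t_incr.
have t_gt0 k : 0 < t k by have := t_le 0%nat k (leq0n k); lra.
have exp0 y : y * exp (c * 0) = y by rewrite Rmult_0_r exp_0 Rmult_1_r.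
have upto k : forall s, 0 <= s <= t k -> forall i, Rabs (x s i) * exp (c * s) <= C * v i.
  elim: k => [|k IH] s hs.
  - case: (Rle_lt_or_eq_dec 0 s (proj1 hs)) => [s_gt0|<-] i; last by rewrite exp0.
    apply: (metzler_flow_decay n F v c x (x 0) 0 (t 0%nat)) => //; try lra.
    + move=> r hr j; apply: x' => [|m]; first lra.
      by have := t_le 0%nat m (leq0n m); lra.
    + move=> j; apply: limit1_in_right => eps eps_gt0.
      case: (x_0 j eps eps_gt0) => d [d_gt0 close].
      by exists d; split=> // r hr; apply: close; lra.
    + move=> j; apply: limit1_in_left => eps eps_gt0.
      case: (x_left 0%nat j eps eps_gt0) => d [d_gt0 close].
      by exists d; split=> // r hr; apply: close; lra.
    + by move=> j; rewrite exp0.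
  - case: (Rle_or_lt s (t k)) => [s_le | s_gt]; first by apply: IH; lra.
    have := t_incr k; have := t_gt0 k => tk_gt0 tk_lt.
    apply: (metzler_flow_decay n F v c x (mulmxv G (x (t k))) (t k) (t k.+1)) => //; try lra.
    + move=> r hr j; apply: x' => [|m]; first lra.
      by case: (leqP m k) => [/t_le | /t_le]; lra.
    + move=> j; apply: limit1_in_right => eps eps_gt0.
      case: (x_jump k j eps eps_gt0) => d [d_gt0 close].
      by exists d; split=> // r hr; apply: close; lra.
    + move=> j; apply: limit1_in_left => eps eps_gt0.
      case: (x_left k.+1 j eps eps_gt0) => d [d_gt0 close].
      by exists d; split=> // r hr; apply: close; lra.
    + move=> j; apply: nonneg_jump_bound => //.
      * by have := x0_le j; have := Rabs_pos (x 0 j); have := v_pos j; nra.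
      * by apply: Rlt_le; apply: exp_pos.
      * by move=> l; apply: IH; lra.
move=> s s_ge0; case: (t_unbdd s) => k sk; apply: (upto k); lra.
Qed.

Lemma GAS_for_of_decay n (F G : mx n n) t c K :
  0 < c -> 0 <= K ->
  (forall x, impulsive_solution F G t x -> forall s, 0 <= s ->
     vnorm (x s) * (1 + c * s) <= K * vnorm (x 0)) ->
  GAS_for F G t.
Proof.
move=> c_gt0 K_ge0 decay.
have vnorm_ge0 (y : vec n) : 0 <= vnorm y by apply: sumR_ge0 => i; exact: Rabs_pos.
split=> [eps eps_gt0 | x x_sol eps eps_gt0].
- exists (eps / (K + 1)); split; first by apply: Rdiv_lt_0_compat; lra.
  move=> x x_sol x0_lt s s_ge0.
  have x0_K : vnorm (x 0) * (K + 1) < eps.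
    have := Rmult_lt_compat_r (K + 1) _ _ ltac:(lra) x0_lt.
    by rewrite /Rdiv Rmult_assoc Rinv_l ?Rmult_1_r //; lra.
  have := decay x x_sol s s_ge0; have := vnorm_ge0 (x s); have := vnorm_ge0 (x 0).
  have : 0 <= c * s by nra.
  nra.
- pose B := K * vnorm (x 0).
  have B_ge0 : 0 <= B by apply: Rmult_le_pos.
  exists (B / (eps * c)) => s hs.
  have ec_gt0 : 0 < eps * c by nra.
  have B_le : B <= s * (eps * c).
    have := Rmult_le_compat_r (eps * c) _ _ (Rlt_le _ _ ec_gt0) hs.
    by rewrite /Rdiv Rmult_assoc Rinv_l ?Rmult_1_r //; lra.
  have s_ge0 : 0 <= s by nra.
  have := decay x x_sol s s_ge0; have := vnorm_ge0 (x s); rewrite -/B; nra.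
Qed.

Theorem positive_impulsive_AS n (F G : mx n n) (v : vec n) :
  metzler F -> mx_nonneg G -> (forall i, 0 < v i) ->
  (forall i, mulmxv F v i < 0) -> (forall i, mulmxv G v i <= v i) ->
  AS_arbitrary_dwell F G.
Proof.
move=> F_metzler G_ge0 v_pos Fv Gv t t_seq.
case: (finite_pos_lb (fun i => - mulmxv F v i / v i)) => [i | c [c_gt0 c_lt]].
  by apply: Rdiv_lt_0_compat; [have := Fv i; lra | exact: v_pos].
have Fcv i : mulmxv F v i + c * v i < 0.
  have := Rmult_lt_compat_r (v i) _ _ (v_pos i) (c_lt i).
  by rewrite /Rdiv Rmult_assoc Rinv_l ?Rmult_1_r; [lra | apply: Rgt_not_eq; exact: v_pos].
pose V := \big[Rplus/0]_(i < n) v i.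
pose W := \big[Rplus/0]_(i < n) / v i.
have inv_ge0 i : 0 <= / v i by apply: Rlt_le; apply: Rinv_0_lt_compat.
have V_ge0 : 0 <= V by apply: sumR_ge0 => i; apply: Rlt_le.
have W_ge0 : 0 <= W by exact: sumR_ge0.
apply: (GAS_for_of_decay n F G t c (V * W)) => // [|x x_sol s s_ge0].
  exact: Rmult_le_pos.
have x0_le i : Rabs (x 0 i) <= vnorm (x 0) * W * v i.
  have x0i := sumR_ge_term _ (fun j => Rabs (x 0 j)) i (fun j => Rabs_pos _).
  have Wv : 1 <= W * v i.
    have := Rmult_le_compat_r (v i) _ _ (Rlt_le _ _ (v_pos i)) (sumR_ge_term _ _ i inv_ge0).
    by rewrite Rinv_l //; apply: Rgt_not_eq; exact: v_pos.
  have := Rabs_pos (x 0 i); rewrite -/(vnorm (x 0)) in x0i; nra.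
have decay := impulsive_solution_decay n F G v c t x _ F_metzler G_ge0 v_pos Fcv Gv t_seq
  x_sol x0_le s s_ge0.
apply: Rle_trans (_ : vnorm (x s) * exp (c * s) <= _).
  by apply: Rmult_le_compat_l; [apply: sumR_ge0 => i; exact: Rabs_pos | exact: exp_ineq1_le].
rewrite [vnorm (x s)]/vnorm -sumR_mulr; apply: Rle_trans (sumR_le _ _ _ decay) _.
rewrite (eq_bigr (fun i => v i * (vnorm (x 0) * W))) => [|i _]; last by ring.
by rewrite sumR_mulr -/V; right; ring.
Qed.

Theorem theorem6 (n mc md : nat) (A J : mx n n) (Bc : mx n mc) (Bd : mx n md)
  (X : mx n n) (Uc : mx mc n) (Ud : mx md n) (alpha : R) :
  pos_diag X ->
  mx_nonneg (madd (madd (mmul A X) (mmul Bc Uc)) (mscal alpha (idmx n))) ->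
  mx_nonneg (madd (mmul J X) (mmul Bd Ud)) ->
  vec_neg (mulmxv (madd (mmul A X) (mmul Bc Uc)) (ones n)) ->
  vec_neg (mulmxv (msub (madd (mmul J X) (mmul Bd Ud)) X) (ones n)) ->
  let Kc := mmul Uc (diag_inv X) in
  let Kd := mmul Ud (diag_inv X) in
  metzler (madd A (mmul Bc Kc)) /\
  mx_nonneg (madd J (mmul Bd Kd)) /\
  AS_arbitrary_dwell (madd A (mmul Bc Kc)) (madd J (mmul Bd Kd)).
Proof.
move=> X_diag M_ge0 N_ge0 M1_neg N1_lt Kc Kd.
have X_pos := proj2 X_diag.
have X_nz j : X j j <> 0 by apply: Rgt_not_eq; exact: X_pos.
have F_entry i j := feedback_entry A Bc Uc X i j X_diag.
have G_entry i j := feedback_entry J Bd Ud X i j X_diag.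
have F_metzler : metzler (madd A (mmul Bc Kc)).
  move=> i j ij; rewrite F_entry; have := X_pos j; have := M_ge0 i j.
  rewrite /madd /mscal /idmx (negbTE ij) Rmult_0_r Rplus_0_r => Mij Xj.
  by apply: Rmult_le_pos => //; apply: Rlt_le; apply: Rinv_0_lt_compat.
have G_ge0 : mx_nonneg (madd J (mmul Bd Kd)).
  move=> i j; rewrite G_entry; apply: Rmult_le_pos; first exact: N_ge0.
  by apply: Rlt_le; apply: Rinv_0_lt_compat.
do 2!split=> //.
apply: (positive_impulsive_AS n _ _ (fun i => X i i)) => // i.
- by rewrite (mulmxv_col_scaled _ (madd (mmul A X) (mmul Bc Uc))).
- rewrite (mulmxv_col_scaled _ (madd (mmul J X) (mmul Bd Ud))) //.
  by have := N1_lt i; rewrite mulmxv_msub (mulmxv_pos_diag X) // /ones; lra.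
Qed.
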